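(* Let $G=(U,V,E)$ be a bipartite graph with $|U|=|V|=N$ in which every vertex of $U$ has at least one neighbor, and run the matching algorithm on $G$. Let $i\ge 0$ with $|M(i)|<N$, let $l\ge 0$ be an integer, and let $u_0\in U$ be free with respect to $M(i)$ with $n_{u_0}\subseteq D_l(i)$. Then every augmenting path in $G$ with respect to $M(i)$ starting at $u_0$ has length at least $2l+1$.
   Context: Matching algorithm. For $u\in U$ let $n_u=\{v\in V:(u,v)\in E\}$. The algorithm maintains a matching $M\subseteq E$ (initially empty) and an integer value $h_v$ for each $v\in V$ (initially $0$). A vertex is free if no edge of $M$ is incident to it. One iteration: choose any free $u\in U$ (arbitrary choice); choose $j\in\arg\min_{v\in n_u}h_v$ (ties broken arbitrarily); if some $u_{\rm old}\in U$ has $(u_{\rm old},j)\in M$, remove $(u_{\rm old},j)$ from $M$ (so $u_{\rm old}$ becomes free); add $(u,j)$ to $M$; increase $h_j$ by $1$. Iterations are repeated while $|M|<N$ and the algorithm terminates when $|M|=N$. $M(i)$ and $h_v(i)$ denote the matching and the values after the $i$-th iteration. For an integer $l$, $D_l(i)=\{v\in V: h_v(i)\ge l\}$. With respect to a matching $M$, an alternating path is a simple path in $G$ whose edges alternate between edges not in $M$ and edges in $M$; an augmenting path is an alternating path whose two endpoints are free vertices (one in $U$, one in $V$). The length of a path is its number of edges. *)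

From mathcomp Require Import all_boot.
Set Implicit Arguments. Unset Strict Implicit. Unset Printing Implicit Defensive.

(* Bipartite graph G = (U, V, E) with E : U -> V -> bool; a matching / edge set
   is a {set U * V}; vertices of G are elements of the sum type U + V. *)

Section Graph.
Variables (U V : finType) (E : U -> V -> bool).

Definition adjG (x y : U + V) : bool :=
  match x, y with
  | inl u, inr v => E u v
  | inr v, inl u => E u v
  | _, _ => false
  end.

Definition edge_inM (M : {set U * V}) (x y : U + V) : bool :=
  match x, y with
  | inl u, inr v => (u, v) \in M
  | inr v, inl u => (u, v) \in M
  | _, _ => false
  end.

Definition freeU (M : {set U * V}) (u : U) : bool := [forall v, (u, v) \notin M].
Definition freeV (M : {set U * V}) (v : V) : bool := [forall u, (u, v) \notin M].

Definition free_vertex (M : {set U * V}) (x : U + V) : bool :=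
  match x with inl u => freeU M u | inr v => freeV M v end.

(* The path with vertex sequence x :: s (length = size s edges) is a simple
   path of G whose edges alternate between edges not in M and edges in M. *)
Definition alternating_path (M : {set U * V}) (x : U + V) (s : seq (U + V)) : bool :=
  [&& path adjG x s, uniq (x :: s) &
      sorted (fun a b : bool => a != b) (pairmap (edge_inM M) x s)].

Definition augmenting_path (M : {set U * V}) (x : U + V) (s : seq (U + V)) : bool :=
  [&& alternating_path M x s, free_vertex M x, free_vertex M (last x s) &
      match x, last x s with
      | inl _, inr _ => true
      | inr _, inl _ => true
      | _, _ => false
      end].

Definition alg_step (M : {set U * V}) (h : V -> nat)
    (M' : {set U * V}) (h' : V -> nat) : Prop :=
  exists (u : U) (j : V),
    [/\ freeU M u, E u j,
        (forall v, E u v -> h j <= h v),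
        M' = (u, j) |: [set e in M | e.2 != j] &
        h' = (fun v => if v == j then (h v).+1 else h v)].

(* run i M h : (M, h) = (M(i), h(i)) for some execution of the algorithm
   (iterations performed only while |M| < N). *)
Inductive alg_run (N : nat) : nat -> {set U * V} -> (V -> nat) -> Prop :=
  | alg_run0 : alg_run N 0 set0 (fun _ => 0)
  | alg_runS i M h M' h' :
      alg_run N i M h -> #|M| < N -> alg_step M h M' h' -> alg_run N i.+1 M' h'.

End Graph.

From mathcomp Require Import all_boot.
From mathcomp Require Import zify.
Set Implicit Arguments. Unset Strict Implicit. Unset Printing Implicit Defensive.

(* Along any run of the algorithm two facts about the values h
   are invariant:
   (a) if (u, v) is in M, then h v <= h v' + 1 for every neighbour v' of u
       (when u took v, h v was minimal over n_u; afterwards only h v grew,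
       by one, while other values never decrease);
   (b) a free vertex of V has never been chosen, so its value is still 0.
   Now follow an alternating path that leaves a vertex v of V through a
   matched edge and ends at a free vertex of V: every two steps
   v -(M)- u -(not M)- v', and (a) gives h v <= h v' + 1, while at the end (b)
   gives value 0.  Hence such a path has at least 2 h v edges.  An augmenting
   path from a free u0 starts with a non-matching edge to some v1 in n_u0,
   where h v1 >= l, and continues as above, so it has at least 2l+1 edges. *)

Notation alternates := (sorted (fun a b : bool => a != b)).

Lemma alternates_next (b : bool) (bs : seq bool) :
  alternates (b :: bs) -> head (~~ b) bs = ~~ b.
Proof. by case: bs => [|c bs] //= /andP [+ _]; case: b c => [] []. Qed.

Lemma alternates_drop2 (a b : bool) (bs : seq bool) :
  alternates [:: a, b & bs] -> alternates bs /\ head a bs = a.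
Proof.
case: bs => [|c bs] /=; first by [].
case/and3P=> ab bc alt; split=> //.
by case: a b c ab bc {alt} => [] [] [].
Qed.

Section HeightInvariant.
Variables (U V : finType) (E : U -> V -> bool).

Definition height_invariant (M : {set U * V}) (h : V -> nat) : Prop :=
  (forall u v v', (u, v) \in M -> E u v' -> h v <= (h v').+1) /\
  (forall v, freeV M v -> h v = 0).

Lemma alg_step_invariant M h M' h' :
  alg_step E M h M' h' -> height_invariant M h -> height_invariant M' h'.
Proof.
case=> u [j [_ _ hmin -> ->]] [tight free0]; split.
- move=> a b b' /setU1P [[-> ->] Eub'|].
    (* the new edge (u, j): h j was minimal over the neighbours of u *)
    rewrite eqxx ltnS; apply: leq_trans (hmin _ Eub') _.
    by case: ifP.
  rewrite inE => /andP [Mab /negbTE ->] Eab'.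
  by apply: leq_trans (tight _ _ _ Mab Eab') _; case: ifP.
- move=> v /forallP freev; case: ifP => [/eqP vj|vj].
    by have := freev u; rewrite vj !inE eqxx.
  apply: free0; apply/forallP => a; apply/negP => Mav.
  by have := freev a; rewrite !inE /= vj Mav orbT.
Qed.

Lemma alg_run_invariant N i M h : alg_run E N i M h -> height_invariant M h.
Proof.
elim=> [|{}i {}M {}h M' h' _ inv _ step]; last exact: alg_step_invariant step inv.
by split=> [u v v'|v _]; rewrite ?inE.
Qed.

(* Stated
   for every k <= h v, so that induction on k peels off the first two edges
   v -(M)- u -(not M)- v', along which the value drops by at most one. *)
Lemma alternating_walk_height M h : height_invariant M h ->
  forall k v s w, k <= h v ->
  path (adjG E) (inr v) s ->
  alternates (pairmap (edge_inM M) (inr v) s) ->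
  head true (pairmap (edge_inM M) (inr v) s) ->
  last (inr v) s = inr w -> freeV M w ->
  k.*2 <= size s.
Proof.
move=> [tight free0]; elim=> // k IH v [|[u|//] s] w hv.
- by move=> _ _ _ [<-] /free0 hv0; rewrite hv0 in hv.
(* the walk cannot stop at the matched vertex u, nor step from u into U *)
case: s => [|[u'|v'] s] /=; first by [].
  by case/andP.
case/and3P=> _ Euv' walk alt Muv endw freew.
have [alt' head'] := alternates_drop2 alt; rewrite Muv in head'.
have hv' : k <= h v' by have := tight _ _ _ Muv Euv'; lia.
have := IH _ _ _ hv' walk alt' head' endw freew.
by rewrite doubleS ltnS.
Qed.

End HeightInvariant.

Theorem mainTheorem7 (U V : finType) (E : U -> V -> bool) (N : nat) :
  #|U| = N -> #|V| = N ->
  (forall u : U, exists v : V, E u v) ->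
  forall (i : nat) (M : {set U * V}) (h : V -> nat),
    alg_run E N i M h -> #|M| < N ->
    forall (l : nat) (u0 : U),
      freeU M u0 ->
      (forall v : V, E u0 v -> l <= h v) ->
      forall s : seq (U + V),
        augmenting_path E M (inl u0) s -> 2 * l + 1 <= size s.
Proof.
move=> _ _ _ i M h run _ l u0 freeu0 hl.
rewrite /augmenting_path /alternating_path.
case=> [|[u1|v1] s] /=; [by rewrite !andbF | by [] | ].
case/and4P=> /and3P [/andP [Eu0v1 walk] _ alt] _ freew.
case endw: (last (inr v1) s) => [//|w] _; rewrite endw in freew.
(* the first edge leaves the free vertex u0, so it is not matched *)
have notM : (u0, v1) \notin M by move/forallP: freeu0; apply.
have headM := alternates_next alt; rewrite (negbTE notM) in headM.
have := alternating_walk_height (alg_run_invariant run) (hl _ Eu0v1)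
          walk (path_sorted alt) headM endw freew.
lia.
Qed.
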